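(* Let $V$ be a finite family of L-frames all anchored at $D$ from above, $G$ its intersection graph, $\mathcal B,\mathcal R\subseteq V$ disjoint dominating sets of $G$, and $H=(\mathcal B\cup\mathcal R,E')$ the graph defined in the context. Then for every $u\in V$ there exist $b\in\mathcal B$ and $r\in\mathcal R$ with $(b,r)\in E'$ such that both $b$ and $r$ intersect $u$. Consequently, for every $\mathcal B'\subseteq\mathcal B$, the set $(\mathcal B\setminus\mathcal B')\cup N_H(\mathcal B')$ is a dominating set of $G$, where $N_H(\mathcal B')$ is the set of neighbours of $\mathcal B'$ in $H$.
   Context: Fix a line $D$ of slope $-1$. An L-frame is the union of a closed horizontal segment and a closed vertical segment sharing an endpoint, its corner $\mathrm{cor}(\cdot)$; it is anchored at $D$ from above if its corner is on $D$, its horizontal segment goes right and its vertical segment goes up from the corner. Two L-frames are adjacent in $G$ iff they intersect; a dominating set is a set $S$ such that every vertex outside $S$ intersects some member of $S$. The graph $H$: for each $u\in V$, among all pairs $(b,r)\in\mathcal B\times\mathcal R$ such that both $b$ and $r$ intersect $u$ (an L-frame intersects itself), choose one pair minimizing the Euclidean distance between $\mathrm{cor}(b)$ and $\mathrm{cor}(r)$, and put it in $E'$. *)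

From HB Require Import structures.
From mathcomp Require Import all_boot all_order all_algebra.
Set Implicit Arguments. Unset Strict Implicit. Unset Printing Implicit Defensive.
Import Order.TTheory GRing.Theory Num.Theory.
Local Open Scope ring_scope.

(* An L-frame: corner (cx, cy); horizontal segment from the corner to (hx, cy);
   vertical segment from the corner to (cx, vy).  (Direction encoded by signs.) *)
Record Lframe (R : rcfType) := mkLframe { cx : R; cy : R; hx : R; vy : R }.

Definition cor (R : rcfType) (f : Lframe R) : R * R := (cx f, cy f).

Definition between (R : rcfType) (a b t : R) : Prop :=
  (Num.min a b <= t) /\ (t <= Num.max a b).

Definition onL (R : rcfType) (f : Lframe R) (p : R * R) : Prop :=
  (p.2 = cy f /\ between (cx f) (hx f) p.1) \/
  (p.1 = cx f /\ between (cy f) (vy f) p.2).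

Definition Lintersect (R : rcfType) (f g : Lframe R) : Prop :=
  exists p : R * R, onL f p /\ onL g p.

(* The line D := { (x, y) | x + y = c } has slope -1.  f is anchored at D from
   above: corner on D, horizontal segment goes right, vertical goes up
   (segments are non-degenerate). *)
Definition anchored_above (R : rcfType) (c : R) (f : Lframe R) : Prop :=
  cx f + cy f = c /\ cx f < hx f /\ cy f < vy f.

Definition edist (R : rcfType) (p q : R * R) : R :=
  Num.sqrt ((p.1 - q.1) ^+ 2 + (p.2 - q.2) ^+ 2).

Definition adjG (R : rcfType) (I : finType) (fr : I -> Lframe R) (u v : I) : Prop :=
  Lintersect (fr u) (fr v).

Definition dominating (R : rcfType) (I : finType) (fr : I -> Lframe R)
  (S : {set I}) : Prop :=
  forall u : I, u \notin S -> exists2 s, s \in S & adjG fr u s.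

(* sel is a valid choice for the construction of H: for each u for which some
   pair (b, r) in B x R with b, r intersecting u exists, sel u is such a pair
   minimizing the Euclidean distance between corners. *)
Definition valid_selection (R : rcfType) (I : finType) (fr : I -> Lframe R)
  (B Rd : {set I}) (sel : I -> I * I) : Prop :=
  forall u : I,
    (exists b r, [/\ b \in B, r \in Rd, Lintersect (fr b) (fr u) &
                    Lintersect (fr r) (fr u)]) ->
    [/\ (sel u).1 \in B, (sel u).2 \in Rd,
        Lintersect (fr (sel u).1) (fr u), Lintersect (fr (sel u).2) (fr u) &
        forall b r, b \in B -> r \in Rd -> Lintersect (fr b) (fr u) ->
          Lintersect (fr r) (fr u) ->
          edist (cor (fr (sel u).1)) (cor (fr (sel u).2))
            <= edist (cor (fr b)) (cor (fr r))].

Definition Eprime (I : finType) (sel : I -> I * I) : {set I * I} :=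
  [set sel u | u : I].

Definition NH (I : finType) (E : {set I * I}) (X : {set I}) : {set I} :=
  [set v | [exists x in X, ((x, v) \in E) || ((v, x) \in E)]].

From HB Require Import structures.
From mathcomp Require Import all_boot all_order all_algebra.
Set Implicit Arguments. Unset Strict Implicit. Unset Printing Implicit Defensive.
Import Order.TTheory GRing.Theory Num.Theory.
Local Open Scope ring_scope.

(* Every L-frame meets itself at its corner, so a dominating set contains, for
   each u, a frame meeting u; hence both B and R do, the selection is defined
   at every u, and its pair (b, r) meets u.  If b was removed (b in B'), then r
   is an H-neighbour of B' and still dominates u. *)

Lemma Lintersect_refl (R : rcfType) (f : Lframe R) : Lintersect f f.
Proof.
have on_cor : onL f (cor f).
  by left; split=> //; rewrite /between /= ge_min le_max lexx.
by exists (cor f).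
Qed.

Lemma Lintersect_sym (R : rcfType) (f g : Lframe R) :
  Lintersect f g -> Lintersect g f.
Proof. by case=> p [fp gp]; exists p. Qed.

Lemma mem_Eprime (I : finType) (sel : I -> I * I) (u : I) :
  sel u \in Eprime sel.
Proof. exact: imset_f. Qed.

Lemma mem_NH_snd (I : finType) (E : {set I * I}) (X : {set I}) (x v : I) :
  x \in X -> (x, v) \in E -> v \in NH E X.
Proof. by move=> xX xvE; rewrite inE; apply/existsP; exists x; rewrite xX xvE. Qed.

Section Selection.

Variables (R : rcfType) (I : finType) (fr : I -> Lframe R).

Lemma dominating_meets (S : {set I}) :
  dominating fr S -> forall u, exists2 s, s \in S & Lintersect (fr s) (fr u).
Proof.
move=> domS u; have [uS | uNS] := boolP (u \in S).
  by exists u => //; apply: Lintersect_refl.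
by have [s sS us] := domS u uNS; exists s => //; apply: Lintersect_sym.
Qed.

Variables (B Rd : {set I}) (sel : I -> I * I).
Hypotheses (domB : dominating fr B) (domR : dominating fr Rd)
  (sel_valid : valid_selection fr B Rd sel).

Lemma selection_meets (u : I) :
  [/\ (sel u).1 \in B, (sel u).2 \in Rd,
      Lintersect (fr (sel u).1) (fr u) & Lintersect (fr (sel u).2) (fr u)].
Proof.
have [b bB bu] := dominating_meets domB u.
have [r rR ru] := dominating_meets domR u.
by have [] := sel_valid (ex_intro _ b (ex_intro _ r (And4 bB rR bu ru))).
Qed.

Lemma dominating_exchange (B' : {set I}) :
  dominating fr ((B :\: B') :|: NH (Eprime sel) B').
Proof.
move=> u _; have [bB _ bu ru] := selection_meets u.
have [bB' | bNB'] := boolP ((sel u).1 \in B').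
  exists (sel u).2; last exact: Lintersect_sym.
  by rewrite inE (mem_NH_snd bB') ?orbT // -surjective_pairing mem_Eprime.
by exists (sel u).1; [rewrite !inE bNB' bB | apply: Lintersect_sym].
Qed.

End Selection.

Theorem mainTheorem5 (R : rcfType) (c : R) (I : finType) (fr : I -> Lframe R)
  (B Rd : {set I}) (sel : I -> I * I) :
  (forall i, anchored_above c (fr i)) ->
  [disjoint B & Rd] ->
  dominating fr B -> dominating fr Rd ->
  valid_selection fr B Rd sel ->
  (forall u : I, exists b r,
      [/\ b \in B, r \in Rd, (b, r) \in Eprime sel,
          Lintersect (fr b) (fr u) & Lintersect (fr r) (fr u)]) /\
  (forall B' : {set I}, B' \subset B ->
      dominating fr ((B :\: B') :|: NH (Eprime sel) B')).
Proof.
move=> _ _ domB domR sel_valid; split=> [u | B' _].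
  have [bB rR bu ru] := selection_meets domB domR sel_valid u.
  by exists (sel u).1, (sel u).2; rewrite -surjective_pairing mem_Eprime.
exact: dominating_exchange domB domR sel_valid B'.
Qed.
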